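(* Let $m\ge 2$ be an integer, let $B\subseteq m\mathbb Z$ be a finite nonempty set, and let $F\subseteq\mathbb Z$ be a finite nonempty set all of whose elements are congruent to $\tilde f$ modulo $m$, where $\tilde f\in\{1,\dots,m-1\}$. If \[m\ge \tilde f+2\tilde f\left\lfloor\frac{|B|+1}{\tilde f}\right\rfloor+\operatorname{mod}_{\tilde f}(|B|+1),\] then $C=m\mathbb N\cup B\cup F$ arises as a minimal additive complement in $\mathbb Z$.
   Context: $\mathbb N=\{0,1,2,\dots\}$, $m\mathbb N=\{mk:k\in\mathbb N\}$; $\operatorname{mod}_{a}n$ denotes the remainder of $n$ upon division by $a$. For $C,W\subseteq\mathbb Z$, $C+W=\{c+w:c\in C,w\in W\}$. $C$ is a minimal additive complement (MAC) to $W$ if $C+W=\mathbb Z$ and no proper subset $C'\subsetneq C$ satisfies $C'+W=\mathbb Z$. $C$ arises as a MAC if there exists $W\subseteq\mathbb Z$ to which $C$ is a MAC. *)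

From Stdlib Require Import ZArith List.
Open Scope Z_scope.

Definition sumset (C W : Z -> Prop) (z : Z) : Prop :=
  exists c w, C c /\ W w /\ z = c + w.

Definition covers (C W : Z -> Prop) : Prop := forall z : Z, sumset C W z.

Definition is_MAC (C W : Z -> Prop) : Prop :=
  covers C W /\
  forall C' : Z -> Prop,
    (forall x, C' x -> C x) ->
    (exists x, C x /\ ~ C' x) ->
    ~ covers C' W.

Definition arises_as_MAC (C : Z -> Prop) : Prop :=
  exists W : Z -> Prop, is_MAC C W.

From Stdlib Require Import ZArith List Lia Classical.
Open Scope Z_scope.

(* Write n = |B|, b_1, ..., b_n for the entries of B and r_e = 2 ft (e / ft) + e mod ft.
   The hypothesis on m says ft + r_(n+1) <= m, so the 2(n+1) residues r_e and r_e + ft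
   (0 <= e <= n) are distinct and lie in [0, m).  W is prescribed class by class, every
   other residue class lying entirely in W:
   - class ft meets W only in ft and class 0 = r_0 only in {w | w + F < ft}, so the only
     summand from C of x + ft is x, for every x in mN;
   - for e >= 1, class r_e + ft meets W only in r_e + ft - b_e and class r_e consists of
     the w with r_e + ft not in w + F, so the only summand of r_e + ft is b_e;
   - each f in F gets the private point t_f = r_1 + ft - G (f - min F + 1) by removing
     t_f - (F \ {f}) from class r_1 (and, harmlessly, the analogous points from every
     class r_e with e >= 1).  G is a multiple of m larger than
     2 (max F - min F) + 2 max |B|, so these holes are far apart and far from r_e + ft,
     and every other point z of class r_e + ft is still z - max F + max F or
     z - min F + min F.
   Classes r_e themselves are covered by large elements of mN. *)

Definition sole_summand (C W : Z -> Prop) (z x : Z) : Prop :=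
  forall c w, C c -> W w -> z = c + w -> c = x.

Lemma is_MAC_of_sole_summands (C W : Z -> Prop) :
  covers C W -> (forall x, C x -> exists z, sole_summand C W z x) -> is_MAC C W.
Proof.
  intros Hcov Hsole; split; [exact Hcov|].
  intros C' HC'C (x & Cx & C'x) Hcov'.
  destruct (Hsole x Cx) as (z & Hz).
  destruct (Hcov' z) as (c & w & C'c & Ww & Ez).
  apply C'x. rewrite <- (Hz c w (HC'C c C'c) Ww Ez). exact C'c.
Qed.

Lemma exists_max_In (l : list Z) :
  l <> nil -> exists M, In M l /\ forall x, In x l -> x <= M.
Proof.
  induction l as [|a l IH]; intros Hl; [congruence|].
  destruct l as [|b l].
  - exists a. split; [now left|]. intros x [->|[]]; lia.
  - destruct IH as (M & HM & Hmax); [discriminate|].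
    exists (Z.max a M). split.
    + destruct (Z.max_spec a M) as [[_ ->]|[_ ->]]; [right|left]; auto.
    + intros x [->|Hx]; [lia|]. specialize (Hmax x Hx). lia.
Qed.

Lemma exists_min_In (l : list Z) :
  l <> nil -> exists M, In M l /\ forall x, In x l -> M <= x.
Proof.
  intros Hl. destruct (exists_max_In (map Z.opp l)) as (M & HM & Hmax).
  { destruct l; [congruence|discriminate]. }
  apply in_map_iff in HM as (x & <- & Hx).
  exists x. split; [exact Hx|]. intros y Hy.
  specialize (Hmax (- y) (in_map Z.opp l y Hy)). lia.
Qed.

Lemma exists_abs_bound (l : list Z) :
  exists R, 0 <= R /\ forall x, In x l -> Z.abs x <= R.
Proof.
  induction l as [|a l (R & HR0 & HR)].
  - exists 0. split; [lia|]. intros x [].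
  - exists (Z.max (Z.abs a) R). split; [lia|].
    intros x [->|Hx]; [lia|]. specialize (HR x Hx). lia.
Qed.

Lemma Zmod_sub_small (m z c s t : Z) :
  z mod m = s -> c mod m = t -> 0 <= s - t < m -> (z - c) mod m = s - t.
Proof. intros Hz Hc Hst. rewrite Zminus_mod, Hz, Hc. apply Z.mod_small; lia. Qed.

Section Slots.
Variable ft : Z.
Hypothesis ft_pos : 0 < ft.

Definition slot (e : Z) : Z := 2 * ft * (e / ft) + e mod ft.

Lemma slot_eq e : slot e = e + ft * (e / ft).
Proof. unfold slot. pose proof (Z.div_mod e ft ltac:(lia)). lia. Qed.

Lemma slot_0 : slot 0 = 0.
Proof. unfold slot. rewrite Z.div_0_l, Z.mod_0_l by lia. lia. Qed.

Lemma slot_nonneg e : 0 <= e -> 0 <= slot e.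
Proof. intros He. rewrite slot_eq. pose proof (Z.div_pos e ft He ft_pos). nia. Qed.

Lemma slot_lt e e' : e < e' -> slot e < slot e'.
Proof.
  intros Hlt. rewrite !slot_eq.
  assert (e / ft <= e' / ft) by (apply Z.div_le_mono; lia). nia.
Qed.

Lemma slot_inj e e' : slot e = slot e' -> e = e'.
Proof.
  intros H. destruct (Z.lt_trichotomy e e') as [Hlt|[->|Hlt]]; auto;
    apply slot_lt in Hlt; lia.
Qed.

Lemma slot_neq_add e e' : slot e <> slot e' + ft.
Proof.
  unfold slot. intros H.
  pose proof (Z.mod_pos_bound e ft ft_pos). pose proof (Z.mod_pos_bound e' ft ft_pos).
  assert (Hd : 0 < 2 * ft * (e / ft - e' / ft) < 2 * ft) by nia.
  destruct (Z.le_gt_cases (e / ft - e' / ft) 0); nia.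
Qed.

End Slots.

Section Construction.
Variables (m ft G R fmin fmax : Z) (B F : list Z).
Hypothesis ft_range : 1 <= ft <= m - 1.
Hypothesis B_ne : B <> nil.
Hypothesis B_mult : forall b, In b B -> (m | b).
Hypothesis B_bound : forall b, In b B -> Z.abs b <= R.
Hypothesis F_residue : forall f, In f F -> f mod m = ft.
Hypothesis fmin_In : In fmin F.
Hypothesis fmin_le : forall f, In f F -> fmin <= f.
Hypothesis fmax_In : In fmax F.
Hypothesis le_fmax : forall f, In f F -> f <= fmax.
Hypothesis G_mult : (m | G).
Hypothesis G_large : 2 * (fmax - fmin) + 2 * R < G.
Hypothesis slots_fit : slot ft (Z.of_nat (length B)) + ft < m.

Local Notation n := (Z.of_nat (length B)).

Definition Cset (x : Z) : Prop := (0 <= x /\ (m | x)) \/ In x B \/ In x F.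

(* [b_at e] is the e-th entry of B, counted from 1; [b_at 0 = 0] makes the rule for
   class [ft] the case [e = 0] of the rule for the classes [slot ft e + ft]. *)
Definition b_at (e : Z) : Z := nth (Z.to_nat e) (0 :: B) 0.

Definition target (r g : Z) : Z := r + ft - G * (g - fmin + 1).

Definition hole (r w : Z) : Prop :=
  exists g f, In g F /\ In f F /\ f <> g /\ w = target r g - f.

Definition free (r w : Z) : Prop :=
  (forall f, In f F -> w + f <> r + ft) /\ ~ hole r w.

Definition first_rule (e w : Z) : Prop :=
  if e =? 0 then forall f, In f F -> w + f < ft else free (slot ft e) w.

Definition Wset (w : Z) : Prop :=
  forall e, 0 <= e <= n ->
    (w mod m = slot ft e -> first_rule e w) /\
    (w mod m = slot ft e + ft -> w = slot ft e + ft - b_at e).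

Lemma n_pos : 1 <= n.
Proof. destruct B; [congruence|]. simpl length. lia. Qed.

Lemma R_nonneg : 0 <= R.
Proof.
  destruct B as [|b B'] eqn:EB; [congruence|].
  pose proof (B_bound b (or_introl eq_refl)). lia.
Qed.

Lemma G_bounds : 2 * (fmax - fmin) < G /\ 0 < G.
Proof. pose proof R_nonneg. pose proof (fmin_le fmax fmax_In). lia. Qed.

Lemma slot_range e : 0 <= e <= n -> 0 <= slot ft e /\ slot ft e + ft < m.
Proof.
  intros He. split; [apply slot_nonneg; lia|].
  destruct (Z.eq_dec e n) as [->|Hne]; [exact slots_fit|].
  pose proof (slot_lt ft ltac:(lia) e n ltac:(lia)). lia.
Qed.

Lemma b_at_0 : b_at 0 = 0.
Proof. reflexivity. Qed.

Lemma b_at_In e : 1 <= e <= n -> In (b_at e) B.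
Proof.
  intros He. unfold b_at. replace (Z.to_nat e) with (S (Z.to_nat (e - 1))) by lia.
  cbn [nth]. apply nth_In. lia.
Qed.

Lemma b_at_mod e : 0 <= e <= n -> b_at e mod m = 0.
Proof.
  intros He. destruct (Z.eq_dec e 0) as [->|Hne]; [apply Z.mod_0_l; lia|].
  apply Z.mod_divide; [lia|]. apply B_mult, b_at_In. lia.
Qed.

Lemma ft_mod : ft mod m = ft.
Proof. apply Z.mod_small. lia. Qed.

Lemma C_residue c : Cset c -> (c mod m = 0 /\ (0 <= c \/ In c B)) \/ (In c F /\ c mod m = ft).
Proof.
  intros [[Hc Hd]|[Hc|Hc]]; [left|left|right]; auto.
  - split; [apply Z.mod_divide; auto; lia|auto].
  - split; [apply Z.mod_divide; auto; lia|auto].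
Qed.

Lemma summand_residue z s c w : z mod m = s -> ft <= s < m -> Cset c -> z = c + w ->
  (w mod m = s /\ (0 <= c \/ In c B)) \/ (In c F /\ w mod m = s - ft).
Proof.
  intros Hz Hs Hc Ez. replace w with (z - c) by lia.
  destruct (C_residue c Hc) as [[Hc0 HcB]|[HcF Hcft]]; [left|right]; split; auto.
  - rewrite (Zmod_sub_small m z c s 0) by (auto; lia). lia.
  - apply (Zmod_sub_small m z c s ft); auto; lia.
Qed.

Lemma target_le r g : In g F -> target r g <= r + ft - G.
Proof. intros Hg. unfold target. pose proof (fmin_le g Hg). pose proof G_bounds. nia. Qed.

Lemma target_ge r g : In g F -> r + ft - G * (fmax - fmin + 1) <= target r g.
Proof. intros Hg. unfold target. pose proof (le_fmax g Hg). pose proof G_bounds. nia. Qed.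

Lemma target_sep r g g' : g < g' -> target r g' + G <= target r g.
Proof. intros Hlt. unfold target. pose proof G_bounds. nia. Qed.

Lemma target_mod r g : 0 <= r -> r + ft < m -> target r g mod m = r + ft.
Proof.
  intros Hr Hrm. unfold target. destruct G_mult as [k Hk]. rewrite Hk.
  replace (r + ft - k * m * (g - fmin + 1)) with (r + ft + (- k * (g - fmin + 1)) * m) by ring.
  rewrite Z.mod_add by lia. apply Z.mod_small. lia.
Qed.

Lemma free_target r g : In g F -> free r (target r g - g).
Proof.
  intros Hg. pose proof G_bounds. pose proof (target_le r g Hg).
  pose proof (fmin_le g Hg). pose proof (le_fmax g Hg).
  split.
  - intros f Hf. pose proof (fmin_le f Hf). pose proof (le_fmax f Hf). lia.
  - intros (g' & f & Hg' & Hf & Hfg & E).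
    pose proof (fmin_le f Hf). pose proof (le_fmax f Hf).
    destruct (Z.lt_trichotomy g g') as [Hlt|[<-|Hlt]].
    + pose proof (target_sep r g g' Hlt). lia.
    + lia.
    + pose proof (target_sep r g' g Hlt). lia.
Qed.

Lemma free_or_blocked r w :
  free r w \/ (exists f, In f F /\ w + f = r + ft) \/ hole r w.
Proof.
  destruct (classic (exists f, In f F /\ w + f = r + ft)) as [Hhit|Hhit]; [tauto|].
  destruct (classic (hole r w)) as [Hhole|Hhole]; [tauto|].
  left. split; [|exact Hhole]. intros f Hf E. apply Hhit. eauto.
Qed.

(* z - fmax can only be blocked when z >= r + ft or z is just above a target,
   z - fmin only when z <= r + ft or z is just below a target. *)
Lemma free_max_or_min r z : z <> r + ft -> (forall g, In g F -> z <> target r g) ->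
  free r (z - fmax) \/ free r (z - fmin).
Proof.
  intros Hz Ht. pose proof G_bounds.
  destruct (free_or_blocked r (z - fmax))
    as [|[(f1 & Hf1 & E1)|(g1 & f1 & Hg1 & Hf1 & _ & E1)]]; [now left| |];
  destruct (free_or_blocked r (z - fmin))
    as [|[(f2 & Hf2 & E2)|(g2 & f2 & Hg2 & Hf2 & _ & E2)]]; try (now right); exfalso;
  pose proof (le_fmax f1 Hf1); pose proof (fmin_le f1 Hf1);
  pose proof (le_fmax f2 Hf2); pose proof (fmin_le f2 Hf2).
  - lia.
  - pose proof (target_le r g2 Hg2). lia.
  - pose proof (target_le r g1 Hg1). lia.
  - destruct (Z.lt_trichotomy g1 g2) as [Hlt|[<-|Hlt]].
    + pose proof (target_sep r g1 g2 Hlt). lia.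
    + apply (Ht g1 Hg1). lia.
    + pose proof (target_sep r g2 g1 Hlt). lia.
Qed.

Lemma Wset_first e w : 0 <= e <= n -> w mod m = slot ft e -> first_rule e w -> Wset w.
Proof.
  intros He Hw Hrule e' He'. split; intros Hw'.
  - replace e' with e by (apply (slot_inj ft); lia). exact Hrule.
  - exfalso. apply (slot_neq_add ft ltac:(lia) e e'). lia.
Qed.

Lemma Wset_second e : 0 <= e <= n -> Wset (slot ft e + ft - b_at e).
Proof.
  intros He e'.
  pose proof (slot_range e He).
  assert (Hres : (slot ft e + ft - b_at e) mod m = slot ft e + ft).
  { rewrite (Zmod_sub_small m _ _ (slot ft e + ft) 0); [lia| |apply b_at_mod, He|lia].
    apply Z.mod_small. lia. }
  intros He'. rewrite Hres. split; intros Hw'.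
  - exfalso. apply (slot_neq_add ft ltac:(lia) e' e). lia.
  - replace e' with e by (apply (slot_inj ft); lia). reflexivity.
Qed.

Lemma Wset_other w :
  (forall e, 0 <= e <= n -> w mod m <> slot ft e /\ w mod m <> slot ft e + ft) -> Wset w.
Proof. intros Hw e He. destruct (Hw e He). split; intros; contradiction. Qed.

Lemma Wset_low e w : 0 <= e <= n -> w mod m = slot ft e ->
  w + fmax < ft - G * (fmax - fmin + 1) -> Wset w.
Proof.
  intros He Hw Hlow. pose proof G_bounds. pose proof (fmin_le fmax fmax_In).
  assert (0 <= G * (fmax - fmin + 1)) by nia.
  apply (Wset_first e); auto. unfold first_rule.
  destruct (e =? 0); [|split].
  - intros f Hf. pose proof (le_fmax f Hf). lia.
  - intros f Hf. pose proof (le_fmax f Hf). pose proof (slot_range e He). lia.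
  - intros (g & f & Hg & Hf & _ & E). pose proof (le_fmax f Hf).
    pose proof (target_ge (slot ft e) g Hg). pose proof (slot_range e He). lia.
Qed.

Lemma cover_first e z : 0 <= e <= n -> z mod m = slot ft e -> sumset Cset Wset z.
Proof.
  intros He Hz. pose proof G_bounds. pose proof (fmin_le fmax fmax_In).
  set (p := Z.abs z + Z.abs fmax + G * (fmax - fmin + 1)).
  assert (0 <= p) by (unfold p; nia).
  exists (m * p), (z - m * p). split; [|split; [|lia]].
  { left. split; [nia|apply Z.divide_factor_l]. }
  apply (Wset_low e); auto.
  - replace (z - m * p) with (z + (- p) * m) by ring. rewrite Z_mod_plus_full. exact Hz.
  - unfold p in *. nia.
Qed.

Lemma cover_ft z : z mod m = ft -> sumset Cset Wset z.
Proof.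
  intros Hz. pose proof n_pos.
  destruct (Z_le_gt_dec ft z).
  - exists (z - ft), ft. split; [left; split|split; [|lia]].
    + lia.
    + apply Z.mod_divide; [lia|].
      rewrite (Zmod_sub_small m z ft ft ft Hz ft_mod); lia.
    + pose proof (Wset_second 0 ltac:(lia)) as HW.
      rewrite slot_0, b_at_0, Z.sub_0_r in HW by lia. exact HW.
  - exists fmax, (z - fmax). split; [right; right; exact fmax_In|split; [|lia]].
    apply (Wset_first 0); [lia| |].
    + rewrite slot_0 by lia. rewrite (Zmod_sub_small m z fmax ft ft Hz); auto; lia.
    + intros f Hf. pose proof (le_fmax f Hf). lia.
Qed.

Lemma cover_second e z : 1 <= e <= n -> z mod m = slot ft e + ft -> sumset Cset Wset z.
Proof.
  intros He Hz. pose proof (slot_range e ltac:(lia)).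
  assert (HF : forall f, In f F -> free (slot ft e) (z - f) -> sumset Cset Wset z).
  { intros f Hf Hfree. exists f, (z - f). split; [right; right; exact Hf|split; [|lia]].
    apply (Wset_first e); [lia| |].
    - rewrite (Zmod_sub_small m z f (slot ft e + ft) ft Hz); auto; lia.
    - unfold first_rule. replace (e =? 0) with false by lia. exact Hfree. }
  destruct (Z.eq_dec z (slot ft e + ft)) as [Ez|Hne].
  { exists (b_at e), (slot ft e + ft - b_at e).
    split; [right; left; apply b_at_In, He|split; [apply Wset_second; lia|lia]]. }
  destruct (classic (exists g, In g F /\ z = target (slot ft e) g)) as [(g & Hg & ->)|Ht].
  { apply (HF g Hg), free_target, Hg. }
  destruct (free_max_or_min (slot ft e) z Hne) as [Hfree|Hfree].
  - intros g Hg Ez. apply Ht. eauto.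
  - exact (HF fmax fmax_In Hfree).
  - exact (HF fmin fmin_In Hfree).
Qed.

Lemma covers_Cset_Wset : covers Cset Wset.
Proof.
  intros z.
  destruct (classic (exists e, 0 <= e <= n /\ z mod m = slot ft e)) as [(e & He & Hz)|Hfirst].
  { exact (cover_first e z He Hz). }
  destruct (classic (exists e, 0 <= e <= n /\ z mod m = slot ft e + ft)) as [(e & He & Hz)|Hsecond].
  { destruct (Z.eq_dec e 0) as [->|He0].
    - apply cover_ft. rewrite slot_0 in Hz by lia. lia.
    - apply (cover_second e); auto; lia. }
  exists 0, z. split; [left; split; [lia|apply Z.divide_0_r]|split; [|lia]].
  apply Wset_other. intros e He. split; intros Ez; [apply Hfirst|apply Hsecond]; eauto.
Qed.

Lemma sole_summand_mult x : 0 <= x -> (m | x) -> sole_summand Cset Wset (x + ft) x.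
Proof.
  intros Hx Hd c w Hc Hw Ez. pose proof n_pos.
  assert (Hz : (x + ft) mod m = ft).
  { destruct Hd as [k ->]. rewrite Z.add_comm, Z.mod_add by lia. exact ft_mod. }
  destruct (Hw 0 ltac:(lia)) as [Hfirst Hsecond]. rewrite slot_0 in Hfirst, Hsecond by lia.
  destruct (summand_residue _ ft c w Hz ltac:(lia) Hc Ez) as [[Hw' _]|[Hc' Hw']].
  - rewrite b_at_0 in Hsecond. specialize (Hsecond ltac:(lia)). lia.
  - specialize (Hfirst ltac:(lia) c Hc'). lia.
Qed.

Lemma sole_summand_B e : 1 <= e <= n -> sole_summand Cset Wset (slot ft e + ft) (b_at e).
Proof.
  intros He c w Hc Hw Ez. pose proof (slot_range e ltac:(lia)).
  assert (Hz : (slot ft e + ft) mod m = slot ft e + ft) by (apply Z.mod_small; lia).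
  destruct (Hw e ltac:(lia)) as [Hfirst Hsecond].
  destruct (summand_residue _ _ c w Hz ltac:(lia) Hc Ez) as [[Hw' _]|[Hc' Hw']].
  - specialize (Hsecond Hw'). lia.
  - specialize (Hfirst ltac:(lia)). unfold first_rule in Hfirst.
    replace (e =? 0) with false in Hfirst by lia.
    destruct (proj1 Hfirst c Hc'). lia.
Qed.

Lemma sole_summand_F f : In f F -> sole_summand Cset Wset (target (slot ft 1) f) f.
Proof.
  intros Hf c w Hc Hw Ez. pose proof n_pos. pose proof R_nonneg.
  pose proof (fmin_le fmax fmax_In).
  pose proof (slot_range 1 ltac:(lia)).
  pose proof (target_mod (slot ft 1) f ltac:(lia) ltac:(lia)) as Hz.
  destruct (Hw 1 ltac:(lia)) as [Hfirst Hsecond].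
  destruct (summand_residue _ _ c w Hz ltac:(lia) Hc Ez) as [[Hw' Hc0]|[Hc' Hw']].
  - specialize (Hsecond Hw'). pose proof (target_le (slot ft 1) f Hf).
    pose proof (B_bound (b_at 1) (b_at_In 1 ltac:(lia))).
    destruct Hc0 as [Hc0|HcB]; [|pose proof (B_bound c HcB)]; lia.
  - specialize (Hfirst ltac:(lia)). destruct (Z.eq_dec c f) as [|Hne]; [assumption|].
    exfalso. apply (proj2 Hfirst). exists f, c. repeat split; auto. lia.
Qed.

Lemma sole_summand_Cset x : Cset x -> exists z, sole_summand Cset Wset z x.
Proof.
  intros [[Hx Hd]|[HxB|HxF]].
  - exists (x + ft). apply sole_summand_mult; assumption.
  - destruct (In_nth B x 0 HxB) as (i & Hi & Ei).
    assert (Hb : b_at (Z.of_nat i + 1) = x).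
    { unfold b_at. replace (Z.to_nat (Z.of_nat i + 1)) with (S i) by lia. exact Ei. }
    exists (slot ft (Z.of_nat i + 1) + ft). rewrite <- Hb. apply sole_summand_B. lia.
  - exists (target (slot ft 1) x). apply sole_summand_F, HxF.
Qed.

Lemma Cset_is_MAC : is_MAC Cset Wset.
Proof. exact (is_MAC_of_sole_summands _ _ covers_Cset_Wset sole_summand_Cset). Qed.

End Construction.

Theorem proposition5 (m ft : Z) (B F : list Z) :
  2 <= m ->
  B <> nil -> NoDup B -> (forall b, In b B -> (m | b)) ->
  F <> nil -> (forall f, In f F -> f mod m = ft) ->
  1 <= ft <= m - 1 ->
  ft + 2 * ft * ((Z.of_nat (length B) + 1) / ft)
     + (Z.of_nat (length B) + 1) mod ft <= m ->
  arises_as_MAC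
    (fun x => (0 <= x /\ (m | x)) \/ In x B \/ In x F).
Proof.
  (* Duplicates in B are harmless: each list position gets its own slot. *)
  intros _ HB _ HBm HF HFm Hft Hfit.
  destruct (exists_min_In F HF) as (fmin & Hfmin & Hmin).
  destruct (exists_max_In F HF) as (fmax & Hfmax & Hmax).
  destruct (exists_abs_bound B) as (R & HR0 & HR).
  assert (Hslots : slot ft (Z.of_nat (length B)) + ft < m).
  { pose proof (slot_lt ft ltac:(lia) _ (Z.of_nat (length B) + 1) (Z.lt_succ_diag_r _)).
    unfold slot at 2 in H. lia. }
  exists (Wset m ft (m * (2 * (fmax - fmin) + 2 * R + 1)) fmin B F).
  apply (Cset_is_MAC m ft _ R fmin fmax); auto.
  - apply Z.divide_factor_l.
  - pose proof (Hmin fmax Hfmax). nia.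
Qed.
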